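(* Consider the repeated service game described in the context, with $t>0$, $c>0$, and a strictly decreasing continuous utility $\Gamma:[0,1]\to(0,\infty)$. Let $d^{\max}\in(0,1)$ and $w^{\min}\in(0,1)$ with $w^{\min}\Gamma(0)>c$. Let $d^\star$ be the unique $x\in(0,1)$ with $(1-x)\Gamma(x)=c/w^{\min}$. Define $$p^\star=\frac{c\left(\frac{c}{w^{\min}}-\Gamma(d^{\max})(1-d^{\max})\right)}{\left(\Gamma(d^\star)-\Gamma(d^{\max})\right)(1-d^\star)(1-d^{\max})-c\,(d^\star-d^{\max})},$$ $$\tau^\star=\frac{\Gamma(d^{\max})-p^\star}{\Gamma(d^{\max})-c/(1-d^{\max})}\,t,$$ assuming the denominators are nonzero and $0<\tau^\star<t$. Let $$w^\star=\frac{c}{(1-d^{\max})\Gamma(d^{\max})}.$$ Then: (i) with $(\tau,p)=(\tau^\star,p^\star)$, the cooperation conditions hold for every $d\in(0,d^{\max}]$ and every $w\in[w^\star,1)$; (ii) with $(\tau,p)=(\tau^\star,p^\star)$, the cooperation conditions hold for every $w\in[w^{\min},1)$ and every $d\in(0,d^\star]$; (iii) these thresholds are optimal. For every $\tau\in(0,t)$, every $p>0$ and every $w\in(0,1)$ with $w<w^\star$, the cooperation conditions fail at $d=d^{\max}$. Likewise, for every $\tau\in(0,t)$, every $p>0$ and every $d\in(d^\star,1)$, the cooperation conditions fail at $w=w^{\min}$.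
   Context: A service provider (SP) and a client interact in rounds of duration $t>0$. The parameters are: trial time $\tau\in(0,t)$, SP cost per unit time $c>0$, price per unit time $p>0$, channel outage probability $d\in(0,1)$, continuation probability (cooperation willingness) $w\in(0,1)$, and a client utility function $\Gamma$. When both players use COOP, the long-term payoffs are $$\Pi_s^{\mathrm C}=\frac{(1-d)(p-c)t-dc\tau}{1-(1-d)w},\qquad \Pi_c^{\mathrm C}=\frac{(1-d)(\Gamma(d)-p)t+d\Gamma(d)\tau}{1-(1-d)w}.$$ For an integer $j\ge 2$, the long-term payoff of a player using the defect-and-recover-after-$j$-rounds strategy JDEF$_j$ against COOP is: - for the SP, $$\Pi_s^{(j)}=\frac{(1-d)\big(pt-c\tau-w^{j-1}c(t-\tau)\big)-dc\tau}{1-(1-d)w^{j}};$$ - for the client, $$\Pi_c^{(j)}=\frac{(1-d)\big(\Gamma(d)\tau+w^{j-1}(\Gamma(d)(t-\tau)-pt)\big)+d\Gamma(d)\tau}{1-(1-d)w^{j}}.$$ The cooperation conditions (at given $d,w,\tau,p$) hold when both of the following hold: - $\Pi_s^{\mathrm C}\ge\Pi_s^{(j)}$ for all integers $j\ge2$; - $\Pi_c^{\mathrm C}\ge \Pi_c^{(j)}$ for all integers $j\ge 2$. *)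

From Stdlib Require Import Reals Lra.
Open Scope R_scope.

Definition continuous_on_01 (G : R -> R) : Prop :=
  forall x, 0 <= x <= 1 -> forall eps, 0 < eps ->
    exists delta, 0 < delta /\
      forall y, 0 <= y <= 1 -> Rabs (y - x) < delta -> Rabs (G y - G x) < eps.

Definition strict_decr_01 (G : R -> R) : Prop :=
  forall x y, 0 <= x <= 1 -> 0 <= y <= 1 -> x < y -> G y < G x.

(* Long-term payoffs: both COOP. *)
Definition Pi_s_C (t c : R) (d w tau p : R) : R :=
  ((1 - d) * (p - c) * t - d * c * tau) / (1 - (1 - d) * w).

Definition Pi_c_C (t : R) (G : R -> R) (d w tau p : R) : R :=
  ((1 - d) * (G d - p) * t + d * G d * tau) / (1 - (1 - d) * w).

(* Long-term payoffs of JDEF_j against COOP. *)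
Definition Pi_s_J (t c : R) (d w tau p : R) (j : nat) : R :=
  ((1 - d) * (p * t - c * tau - w ^ (j - 1) * c * (t - tau)) - d * c * tau)
  / (1 - (1 - d) * w ^ j).

Definition Pi_c_J (t : R) (G : R -> R) (d w tau p : R) (j : nat) : R :=
  ((1 - d) * (G d * tau + w ^ (j - 1) * (G d * (t - tau) - p * t)) + d * G d * tau)
  / (1 - (1 - d) * w ^ j).

Definition coop_conditions (t c : R) (G : R -> R) (d w tau p : R) : Prop :=
  (forall j : nat, (2 <= j)%nat -> Pi_s_C t c d w tau p >= Pi_s_J t c d w tau p j) /\
  (forall j : nat, (2 <= j)%nat -> Pi_c_C t G d w tau p >= Pi_c_J t G d w tau p j).

(* For every j >= 2, Pi^C - Pi^(j) is a positive multiple of a quantity that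
   does not depend on j, so the cooperation conditions reduce to two linear constraints in
   (tau, p): the SP constraint w((1-d)pt - c tau) >= c(t - tau) and the client
   constraint Gamma(d)(t - (1-w)tau) >= pt.  Both become easier as d decreases
   and as w increases.  The pair (taustar, pstar) is chosen so that both
   constraints bind at the corner (dmax, wstar) and at the corner
   (dstar, wmin), which gives (i) and (ii).  Conversely, chaining the two
   constraints shows that they are incompatible as soon as
   w (1-d) Gamma(d) < c, which is the case at d = dmax for w < wstar, and at
   w = wmin for d > dstar. *)

From Stdlib Require Import Reals Lra Lia Psatz.
Open Scope R_scope.

Definition sp_condition (t c d w tau p : R) : Prop :=
  c * (t - tau) <= w * ((1 - d) * p * t - c * tau).

Definition client_condition (t g w tau p : R) : Prop :=
  p * t <= g * (t - (1 - w) * tau).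

Lemma Rge_iff_scaled_nonneg (x y k s : R) :
  0 < k -> x - y = k * s -> (x >= y <-> 0 <= s).
Proof. intros Hk E; split; intro H; nra. Qed.

Lemma discount_factor_pos (d w : R) (k : nat) :
  0 < d < 1 -> 0 < w < 1 -> 0 < 1 - (1 - d) * w ^ S k.
Proof.
  intros Hd Hw.
  pose proof (pow_lt_1_compat w (S k) ltac:(lra) ltac:(lia)).
  nra.
Qed.

Section Deviation.

Variables (t c d w tau p : R) (G : R -> R).
Hypotheses (Hd : 0 < d < 1) (Hw : 0 < w < 1).

Let deviation_weight (k : nat) : R :=
  (1 - d) * (1 - w ^ k) / ((1 - (1 - d) * w) * (1 - (1 - d) * w ^ S k)).

Lemma deviation_weight_pos (k : nat) : (1 <= k)%nat -> 0 < deviation_weight k.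
Proof.
  intro Hk.
  pose proof (pow_lt_1_compat w k ltac:(lra) Hk).
  pose proof (discount_factor_pos d w 0 Hd Hw).
  pose proof (discount_factor_pos d w k Hd Hw).
  unfold deviation_weight; apply Rdiv_lt_0_compat; [nra|].
  rewrite pow_1 in *; nra.
Qed.

Lemma Pi_s_C_sub_J (k : nat) :
  Pi_s_C t c d w tau p - Pi_s_J t c d w tau p (S k) =
  deviation_weight k * (w * ((1 - d) * p * t - c * tau) - c * (t - tau)).
Proof.
  pose proof (discount_factor_pos d w 0 Hd Hw).
  pose proof (discount_factor_pos d w k Hd Hw).
  rewrite pow_1 in *.
  unfold Pi_s_C, Pi_s_J, deviation_weight; simpl.
  replace (k - 0)%nat with k by lia.
  field; simpl in *; lra.
Qed.

Lemma Pi_c_C_sub_J (k : nat) :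
  Pi_c_C t G d w tau p - Pi_c_J t G d w tau p (S k) =
  deviation_weight k * (G d * (t - (1 - w) * tau) - p * t).
Proof.
  pose proof (discount_factor_pos d w 0 Hd Hw).
  pose proof (discount_factor_pos d w k Hd Hw).
  rewrite pow_1 in *.
  unfold Pi_c_C, Pi_c_J, deviation_weight; simpl.
  replace (k - 0)%nat with k by lia.
  field; simpl in *; lra.
Qed.

Lemma Pi_s_C_ge_J_iff (j : nat) : (2 <= j)%nat ->
  Pi_s_C t c d w tau p >= Pi_s_J t c d w tau p j <-> sp_condition t c d w tau p.
Proof.
  intro Hj; destruct j as [|k]; [lia|].
  unfold sp_condition.
  rewrite (Rge_iff_scaled_nonneg _ _ _ _ (deviation_weight_pos k ltac:(lia))
             (Pi_s_C_sub_J k)).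
  lra.
Qed.

Lemma Pi_c_C_ge_J_iff (j : nat) : (2 <= j)%nat ->
  Pi_c_C t G d w tau p >= Pi_c_J t G d w tau p j <-> client_condition t (G d) w tau p.
Proof.
  intro Hj; destruct j as [|k]; [lia|].
  unfold client_condition.
  rewrite (Rge_iff_scaled_nonneg _ _ _ _ (deviation_weight_pos k ltac:(lia))
             (Pi_c_C_sub_J k)).
  lra.
Qed.

Lemma coop_conditionsE :
  coop_conditions t c G d w tau p <->
  sp_condition t c d w tau p /\ client_condition t (G d) w tau p.
Proof.
  unfold coop_conditions; split.
  - intros [Hs Hc]; split.
    + apply (Pi_s_C_ge_J_iff 2); auto.
    + apply (Pi_c_C_ge_J_iff 2); auto.
  - intros [Hs Hc]; split; intros j Hj.
    + apply Pi_s_C_ge_J_iff; auto.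
    + apply Pi_c_C_ge_J_iff; auto.
Qed.

End Deviation.

Lemma sp_condition_monotone (t c d0 w0 d w tau p : R) :
  0 < t -> 0 < c -> 0 < tau < t -> 0 < w0 -> d0 < 1 -> d <= d0 -> w0 <= w ->
  sp_condition t c d0 w0 tau p -> sp_condition t c d w tau p.
Proof.
  unfold sp_condition; intros Ht Hc Htau Hw0 Hd0 Hd Hw H.
  assert (Hmargin : 0 < (1 - d0) * p * t - c * tau) by nra.
  assert (Hpt : 0 < p * t) by nra.
  assert (Hgain : (1 - d0) * p * t - c * tau <= (1 - d) * p * t - c * tau) by nra.
  nra.
Qed.

Lemma client_condition_monotone (t g0 w0 g w tau p : R) :
  0 <= tau < t -> 0 <= g0 <= g -> 0 <= w0 <= w ->
  client_condition t g0 w0 tau p -> client_condition t g w tau p.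
Proof.
  unfold client_condition; intros Htau Hg Hw H.
  assert (Hdur : 0 < t - (1 - w0) * tau) by nra.
  assert (t - (1 - w0) * tau <= t - (1 - w) * tau) by nra.
  nra.
Qed.

Lemma sp_client_incompatible (t c d g w tau p : R) :
  0 < t -> 0 < c -> 0 < w < 1 -> 0 < tau < t -> d < 1 -> w * (1 - d) * g < c ->
  ~ (sp_condition t c d w tau p /\ client_condition t g w tau p).
Proof.
  unfold sp_condition, client_condition; intros Ht Hc Hw Htau Hd Hg [Hs Hcl].
  assert (Hdur : 0 < t - (1 - w) * tau) by nra.
  (* Feeding the client bound on p t into the SP constraint yields
     c (t - tau) < c (t - (1 - w) tau) - w c tau = c (t - tau). *)
  assert (w * (1 - d) * (p * t) <= w * (1 - d) * (g * (t - (1 - w) * tau))).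
  { apply Rmult_le_compat_l; nra. }
  nra.
Qed.

Lemma Rminus_div_neq0 (g c e : R) : e <> 0 -> g - c / e <> 0 -> g * e - c <> 0.
Proof.
  intros He Hn E; apply Hn.
  replace (g - c / e) with ((g * e - c) / e) by (field; exact He).
  rewrite E; unfold Rdiv; ring.
Qed.

Lemma constraints_bind_at_wstar (t c g dm ws tau p : R) :
  0 < g -> dm < 1 -> g - c / (1 - dm) <> 0 ->
  ws = c / ((1 - dm) * g) ->
  tau = (g - p) / (g - c / (1 - dm)) * t ->
  c * (t - tau) = ws * ((1 - dm) * p * t - c * tau) /\
  p * t = g * (t - (1 - ws) * tau).
Proof.
  intros Hg Hdm Hn -> ->.
  pose proof (Rminus_div_neq0 g c (1 - dm) ltac:(lra) Hn).
  split; field; repeat split; lra.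
Qed.

Lemma constraints_bind_at_dstar (t c gs gm ds dm w tau p : R) :
  0 < w -> ds < 1 -> dm < 1 ->
  (1 - ds) * gs = c / w ->
  (gs - gm) * (1 - ds) * (1 - dm) - c * (ds - dm) <> 0 ->
  gm - c / (1 - dm) <> 0 ->
  p = c * (c / w - gm * (1 - dm)) /
      ((gs - gm) * (1 - ds) * (1 - dm) - c * (ds - dm)) ->
  tau = (gm - p) / (gm - c / (1 - dm)) * t ->
  c * (t - tau) = w * ((1 - ds) * p * t - c * tau) /\
  p * t = gs * (t - (1 - w) * tau).
Proof.
  intros Hw Hds Hdm Hstar HQ Hn -> ->.
  pose proof (Rminus_div_neq0 gm c (1 - dm) ltac:(lra) Hn).
  assert (Ec : c = w * (1 - ds) * gs) by (rewrite Rmult_assoc, Hstar; field; lra).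
  subst c.
  split; field; repeat split; lra.
Qed.

Lemma strict_decr_01_le (G : R -> R) (x y : R) :
  strict_decr_01 G -> 0 <= x -> x <= y -> y <= 1 -> G y <= G x.
Proof.
  intros HG Hx Hxy Hy.
  destruct (Req_dec x y) as [<- | Hne]; [lra |].
  left; apply HG; lra.
Qed.

Theorem theorem2 (t c : R) (G : R -> R) (dmax wmin dstar : R) :
  0 < t -> 0 < c ->
  strict_decr_01 G -> continuous_on_01 G ->
  (forall x, 0 <= x <= 1 -> 0 < G x) ->
  0 < dmax < 1 -> 0 < wmin < 1 -> wmin * G 0 > c ->
  (* dstar is the unique x in (0,1) with (1-x) G(x) = c / wmin *)
  0 < dstar < 1 -> (1 - dstar) * G dstar = c / wmin ->
  let pstar :=
    c * (c / wmin - G dmax * (1 - dmax)) /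
    ((G dstar - G dmax) * (1 - dstar) * (1 - dmax) - c * (dstar - dmax)) in
  let taustar := (G dmax - pstar) / (G dmax - c / (1 - dmax)) * t in
  let wstar := c / ((1 - dmax) * G dmax) in
  (G dstar - G dmax) * (1 - dstar) * (1 - dmax) - c * (dstar - dmax) <> 0 ->
  G dmax - c / (1 - dmax) <> 0 ->
  0 < taustar < t ->
  (* (i) *)
  (forall d w, 0 < d <= dmax -> wstar <= w < 1 ->
     coop_conditions t c G d w taustar pstar) /\
  (* (ii) *)
  (forall d w, 0 < d <= dstar -> wmin <= w < 1 ->
     coop_conditions t c G d w taustar pstar) /\
  (* (iii) optimality *)
  (forall tau p w, 0 < tau < t -> 0 < p -> 0 < w < 1 -> w < wstar ->
     ~ coop_conditions t c G dmax w tau p) /\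
  (forall tau p d, 0 < tau < t -> 0 < p -> dstar < d < 1 ->
     ~ coop_conditions t c G d wmin tau p).
Proof.
  intros Ht Hc Hdec _ Hpos Hdm Hwm _ Hds Hstar pstar taustar wstar HQ Hn Htau.
  assert (HGm : 0 < G dmax) by (apply Hpos; lra).
  assert (HGs : 0 < G dstar) by (apply Hpos; lra).
  assert (Hwstar : wstar * ((1 - dmax) * G dmax) = c) by (unfold wstar; field; nra).
  destruct (constraints_bind_at_wstar t c (G dmax) dmax wstar taustar pstar
              HGm ltac:(lra) Hn eq_refl eq_refl) as [S1 C1].
  destruct (constraints_bind_at_dstar t c (G dstar) (G dmax) dstar dmax wmin taustar pstar
              ltac:(lra) ltac:(lra) ltac:(lra) Hstar HQ Hn eq_refl eq_refl) as [S2 C2].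
  assert (Hwstar_pos : 0 < wstar) by (apply Rdiv_lt_0_compat; nra).
  split; [| split; [| split]].
  - intros d w Hd Hw; rewrite coop_conditionsE by lra; split.
    + apply (sp_condition_monotone t c dmax wstar); try (unfold sp_condition; lra).
    + apply (client_condition_monotone t (G dmax) wstar); try (unfold client_condition; lra).
      pose proof (strict_decr_01_le G d dmax Hdec); lra.
  - intros d w Hd Hw; rewrite coop_conditionsE by lra; split.
    + apply (sp_condition_monotone t c dstar wmin); try (unfold sp_condition; lra).
    + apply (client_condition_monotone t (G dstar) wmin); try (unfold client_condition; lra).
      pose proof (strict_decr_01_le G d dstar Hdec); lra.
  - intros tau p w Htau' _ Hw Hlt.
    rewrite coop_conditionsE by lra.
    apply sp_client_incompatible; try lra; nra.
  - intros tau p d Htau' _ Hd.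
    rewrite coop_conditionsE by lra.
    apply sp_client_incompatible; try lra.
    assert (G d < G dstar) by (apply Hdec; lra).
    assert (0 < G d) by (apply Hpos; lra).
    assert ((1 - d) * G d < (1 - dstar) * G dstar) by nra.
    replace c with (wmin * ((1 - dstar) * G dstar)) by (rewrite Hstar; field; lra).
    nra.
Qed.
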